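(* Under the hypotheses of Theorem 2 (A1, A2, A3(D), $\beta\in[0,1)$, $0<\eta<2N/(\sigma_{\max}^2H_{\ell^{-1}(N\mathcal{L}(w(1)))})$), the GDM iterates satisfy $$\sum_{t=1}^\infty\|w(t+1)-w(t)\|^2<\infty\quad\text{and}\quad\|w(t)\|=O(\sqrt t).$$
   Context: Setting. The data are $S=\{x_1,\dots,x_N\}\subset\mathbb{R}^d$, with labels absorbed. The empirical loss is $\mathcal{L}(w)=\frac1N\sum_i\ell(\langle w,x_i\rangle)$. $\sigma_{\max}$ is the spectral norm of $(x_1,\dots,x_N)$. A1: there is $w$ with $\langle w,x_i\rangle>0$ for all $i$. A2: $\ell$ is differentiable, $\ell'<0$, $\ell(x),\ell'(x)\to0$ as $x\to\infty$, and $\limsup_{x\to-\infty}\ell'(x)<0$. There are positive $\mu_\pm,x_\pm$ with $-\ell'(x)\le(1+e^{-\mu_+x})e^{-x}$ for $x>x_+$ and $-\ell'(x)\ge(1-e^{-\mu_-x})e^{-x}$ for $x>x_-$. $\ell^{-1}$ is the inverse of $\ell:\mathbb{R}\to(0,\infty)$. A3(D): $H_{s_0}$ is the smallest constant with $|\ell'(x)-\ell'(y)|\le H_{s_0}|x-y|$ for $x,y\ge s_0$ (finite for every $s_0$). GDM: $m(0)=0$, $m(t)=\beta m(t-1)+(1-\beta)\nabla\mathcal{L}(w(t))$, $w(t+1)=w(t)-\eta m(t)$ for $t\ge1$, from an arbitrary $w(1)$. *)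

From HB Require Import structures.
From mathcomp Require Import all_boot all_order all_algebra.
From mathcomp Require Import all_classical all_reals all_analysis.
Set Implicit Arguments. Unset Strict Implicit. Unset Printing Implicit Defensive.
Import Order.TTheory GRing.Theory Num.Theory.
Import numFieldNormedType.Exports.
Local Open Scope classical_set_scope.
Local Open Scope ring_scope.

Section Defs.
Variable R : realType.

Definition enorm (m n : nat) (A : 'M[R]_(m, n)) : R :=
  Num.sqrt (\sum_(i < m) \sum_(j < n) A i j ^+ 2).

Definition spectral_norm (m n : nat) (A : 'M[R]_(m, n)) : R :=
  inf [set c : R | 0 <= c /\ forall v : 'cV[R]_n, enorm (A *m v) <= c * enorm v].

Definition lip_const_above (f : R -> R) (s0 : R) : R :=
  inf [set c : R | 0 <= c /\ forall x y, s0 <= x -> s0 <= y ->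
                      `|f x - f y| <= c * `|x - y|].

(* Data matrix X : 'M_(d, N) whose i-th column is x_i (labels absorbed). *)
Definition margin (d N : nat) (X : 'M[R]_(d, N)) (w : 'rV[R]_d) (i : 'I_N) : R :=
  \sum_(j < d) w 0 j * X j i.

Definition emp_loss (d N : nat) (l : R -> R) (X : 'M[R]_(d, N)) (w : 'rV[R]_d) : R :=
  N%:R^-1 * \sum_(i < N) l (margin X w i).

Definition emp_grad (d N : nat) (l : R -> R) (X : 'M[R]_(d, N)) (w : 'rV[R]_d)
  : 'rV[R]_d :=
  \row_(j < d) (N%:R^-1 * \sum_(i < N) derive1 l (margin X w i) * X j i).

End Defs.

(* Write alpha = eta (1 - beta), k = beta / (2 alpha) and dw(t) = w(t+1) - w(t) = -eta m(t),
   so that dw(t) = beta dw(t-1) - alpha grad L(w(t)).  The energy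
   E(t) = L(w(t)) + k |dw(t-1)|^2 decreases by at least (1/eta - H sigma^2 / (2N)) |dw(t)|^2
   per step, a positive multiple of |dw(t)|^2 by the step-size condition, which bounds the
   sum of squared steps.  The descent lemma only holds where the margins are >= s1, i.e.
   where l' is H-Lipschitz; every sublevel set {E <= L(w(1))} lies there, and a first-exit
   argument along the segment [w(t), w(t+1)] shows that the step never leaves it.  Finally
   |w(t)|^2 <= t (|w(1)|^2 + sum |dw|^2) by Cauchy-Schwarz. *)

From HB Require Import structures.
From mathcomp Require Import all_boot all_order all_algebra.
From mathcomp Require Import all_classical all_reals all_analysis.
From mathcomp Require Import ring lra.
Set Implicit Arguments. Unset Strict Implicit. Unset Printing Implicit Defensive.
Import Order.TTheory GRing.Theory Num.Theory.
Import numFieldNormedType.Exports.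
Local Open Scope classical_set_scope.
Local Open Scope ring_scope.

Section DecreasingLoss.
Variables (R : realType) (l : R -> R).
Hypothesis l_derivable : forall x : R, derivable l x 1.
Hypothesis derive1_lt0 : forall x : R, derive1 l x < 0.

Lemma is_derive_derive1 (x : R) : is_derive x 1 l (derive1 l x).
Proof. by rewrite derive1E; exact: derivableP. Qed.

Lemma loss_decr (x y : R) : x < y -> l y < l x.
Proof.
move=> xy; have lcont : {within `[x, y], continuous l}.
  by apply: derivable_within_continuous => z _; exact: l_derivable.
have [c _ E] := MVT xy (fun z _ => is_derive_derive1 z) lcont.
by rewrite -subr_gt0 -opprB E -mulNr mulr_gt0 ?oppr_gt0 ?subr_gt0.
Qed.

Lemma loss_gt0 : l x @[x --> +oo] --> 0 -> forall x, 0 < l x.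
Proof.
move=> l_cvg0 x; apply: (@le_lt_trans _ _ (l (x + 1))); last first.
  by apply: loss_decr; rewrite ltrDl.
rewrite -(cvg_lim _ l_cvg0) //; apply: limr_le; first by apply/cvg_ex; exists 0.
near=> y; have : x + 1 <= y by near: y; apply: nbhs_pinfty_ge; rewrite num_real.
by rewrite le_eqVlt => /orP[/eqP <- //|/loss_decr/ltW].
Unshelve. all: by end_near.
Qed.

End DecreasingLoss.

Section LipschitzAbove.
Variables (R : realType) (f : R -> R) (s0 : R).
Hypothesis f_lip : exists c : R, 0 <= c /\ forall x y, s0 <= x -> s0 <= y ->
  `|f x - f y| <= c * `|x - y|.

Lemma lip_const_aboveP x y : s0 <= x -> s0 <= y ->
  `|f x - f y| <= lip_const_above f s0 * `|x - y|.
Proof.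
move=> hx hy; have [->|xy] := eqVneq x y; first by rewrite !subrr normr0 mulr0.
have pxy : 0 < `|x - y| by rewrite normr_gt0 subr_eq0.
rewrite -ler_pdivrMr //; apply: lb_le_inf; first by case: f_lip => c hc; exists c.
by move=> c [_ hc]; rewrite ler_pdivrMr //; apply: hc.
Qed.

Lemma lip_const_above_ge0 : 0 <= lip_const_above f s0.
Proof. by apply: lb_le_inf => [|c []//]; case: f_lip => c hc; exists c. Qed.

End LipschitzAbove.

Section DescentLemma.
Variables (R : realType) (l : R -> R) (s0 : R).
Hypothesis l_derivable : forall x : R, derivable l x 1.
Hypothesis derive1_lip : exists c : R, 0 <= c /\ forall x y, s0 <= x -> s0 <= y ->
  `|derive1 l x - derive1 l y| <= c * `|x - y|.

Local Notation H := (lip_const_above (derive1 l) s0).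

Lemma descent_above x y : s0 <= x -> s0 <= y ->
  l y <= l x + derive1 l x * (y - x) + H / 2 * (y - x) ^+ 2.
Proof.
move=> hx hy; set c := derive1 l x.
pose g u := l u - (c * u + H / 2 * (u - x) ^+ 2).
have dg (u : R) : is_derive u 1 g (derive1 l u - (c + H / 2 * (2 * (u - x)))).
  apply: is_deriveB; first exact: is_derive_derive1.
  apply: is_deriveD.
    apply: is_derive_eq (is_deriveZ c (@is_derive_id _ _ u 1)) _.
    by rewrite /= /GRing.scale /= mulr1.
  have -> : (fun z => H / 2 * (z - x) ^+ 2) = (H / 2) \*: (shift (- x)) ^+ 2.
    by apply/funext => z /=; rewrite /GRing.scale /= !expr2.
  apply: is_derive_eq (is_deriveZ _ (is_deriveX 2 (@is_derive_shift _ u 1 (- x)))) _.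
  by rewrite /GRing.scale /= expr1 mulr1 /shift mulr2n mulrDl mul1r.
have gcont a b : {within `[a, b], continuous g}.
  by apply: derivable_within_continuous => z _; case: (dg z).
(* g' (z) = l'(z) - l'(x) - H (z - x) has the sign of x - z, so x maximizes g *)
suff : g y <= g x by rewrite /g subrr expr0n /= mulr0 addr0; lra.
have [xy|yx|<-//] := ltgtP x y.
- have [z /andP[xz _] E] := MVT xy (fun z _ => dg z) (gcont x y).
  rewrite -subr_le0 E pmulr_lle0 ?subr_gt0 //.
  have := lip_const_aboveP derive1_lip (le_trans hx (ltW xz)) hx.
  by rewrite [`|z - x|]gtr0_norm ?subr_gt0 // ler_norml /c => /andP[_]; lra.
- have [z /andP[yz zx] E] := MVT yx (fun z _ => dg z) (gcont y x).
  rewrite -subr_ge0 E pmulr_lge0 ?subr_gt0 //.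
  have := lip_const_aboveP derive1_lip (le_trans hy (ltW yz)) hx.
  by rewrite [`|z - x|]ltr0_norm ?subr_lt0 // ler_norml /c => /andP[]; lra.
Qed.

End DescentLemma.

Section SumOfSquares.
Variable R : realFieldType.

Lemma sqrD_le (n Q S x : R) : 0 <= n -> 0 <= Q -> S ^+ 2 <= n * Q ->
  (S + x) ^+ 2 <= (n + 1) * (Q + x ^+ 2).
Proof.
move=> n0 Q0 SQ; have [n_eq0 | n_neq0] := eqVneq n 0.
  rewrite n_eq0 mul0r in SQ; rewrite n_eq0.
  have -> : S = 0 by apply/eqP; rewrite -sqrf_eq0 eq_le sqr_ge0 andbT.
  nra.
have n_gt0 : 0 < n by rewrite lt_def n_neq0.
(* expanding, the claim is n x^2 - 2 S x + Q >= 0, i.e. n (n x^2 - 2 S x + Q) >= (S - n x)^2 *)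
have : 0 <= (S - n * x) ^+ 2 by apply: sqr_ge0.
have : 0 <= n * (Q + n * x ^+ 2 - 2 * S * x) -> 0 <= Q + n * x ^+ 2 - 2 * S * x.
  by rewrite pmulr_rge0.
nra.
Qed.

Lemma sqr_sum_le n (x : 'I_n -> R) :
  (\sum_(i < n) x i) ^+ 2 <= n%:R * \sum_(i < n) x i ^+ 2.
Proof.
elim: n x => [|n IHn] x; first by rewrite !big_ord0 expr0n /= mul0r.
rewrite !big_ord_recr /= -natr1; apply: sqrD_le; rewrite ?ler0n ?IHn //.
by apply: sumr_ge0 => i _; apply: sqr_ge0.
Qed.

Lemma ler_term_sum (I : finType) (F : I -> R) j :
  (forall i, 0 <= F i) -> F j <= \sum_i F i.
Proof.
by move=> F_ge0; rewrite (bigD1 j) //= lerDl; apply: sumr_ge0 => i _.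
Qed.

End SumOfSquares.

Section RowVectors.
Variables (R : realType) (d : nat).
Implicit Types u v x : 'rV[R]_d.

Definition vdot u v := \sum_(j < d) u 0 j * v 0 j.
Definition vnorm2 u := vdot u u.

Lemma vnorm2E u : vnorm2 u = \sum_(j < d) u 0 j ^+ 2.
Proof. by apply: eq_bigr => j _; rewrite expr2. Qed.

Lemma vnorm2_ge0 u : 0 <= vnorm2 u.
Proof. by rewrite vnorm2E; apply: sumr_ge0 => j _; apply: sqr_ge0. Qed.

Lemma enorm_rV u : enorm u = Num.sqrt (vnorm2 u).
Proof. by rewrite /enorm big_ord1 vnorm2E. Qed.

Lemma vdotDl u v x : vdot (u + v) x = vdot u x + vdot v x.
Proof. by rewrite /vdot -big_split; apply: eq_bigr => j _; rewrite mxE mulrDl. Qed.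

Lemma vdotZl s u x : vdot (s *: u) x = s * vdot u x.
Proof. by rewrite /vdot mulr_sumr; apply: eq_bigr => j _; rewrite mxE mulrA. Qed.

Lemma vdotZr s u x : vdot u (s *: x) = s * vdot u x.
Proof. by rewrite /vdot mulr_sumr; apply: eq_bigr => j _; rewrite mxE mulrCA. Qed.

Lemma vdotNl u x : vdot (- u) x = - vdot u x.
Proof. by rewrite -scaleN1r vdotZl mulN1r. Qed.

Lemma vdot_le u v : 2 * vdot u v <= vnorm2 u + vnorm2 v.
Proof.
rewrite /vnorm2 /vdot big_distrr -big_split /=; apply: ler_sum => j _.
have := sqr_ge0 (u 0 j - v 0 j); rewrite sqrrB; lra.
Qed.

End RowVectors.

Section DataMatrix.
Variables (R : realType) (d N : nat) (X : 'M[R]_(d, N)).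
Implicit Types u v w : 'rV[R]_d.

Local Notation sigma := (spectral_norm X).

Lemma marginD u v i : margin X (u + v) i = margin X u i + margin X v i.
Proof. by rewrite /margin -big_split /=; apply: eq_bigr => j _; rewrite mxE mulrDl. Qed.

Lemma marginZ s u i : margin X (s *: u) i = s * margin X u i.
Proof. by rewrite /margin mulr_sumr; apply: eq_bigr => j _; rewrite mxE mulrA. Qed.

Lemma marginB u v i : margin X (u - v) i = margin X u i - margin X v i.
Proof. by rewrite marginD -scaleN1r marginZ mulN1r. Qed.

Lemma margin_vnorm2_eq0 u i : vnorm2 u = 0 -> margin X u i = 0.
Proof.
rewrite vnorm2E => /psumr_eq0P u0; rewrite /margin big1 // => j _.
by have /eqP := u0 (fun _ _ => sqr_ge0 _) j isT; rewrite sqrf_eq0 => /eqP ->; rewrite mul0r.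
Qed.

Lemma enorm_cV n (v : 'cV[R]_n) : enorm v = Num.sqrt (\sum_(i < n) v i 0 ^+ 2).
Proof. by rewrite /enorm; under eq_bigr do rewrite big_ord1. Qed.

Lemma enorm_mulmx_le (v : 'cV[R]_N) :
  enorm (X *m v) <= Num.sqrt (N%:R * enorm X ^+ 2) * enorm v.
Proof.
have X2_ge0 : 0 <= \sum_(i < d) \sum_(k < N) X i k ^+ 2.
  by apply: sumr_ge0 => i _; apply: sumr_ge0 => k _; apply: sqr_ge0.
rewrite /enorm sqr_sqrtr // -/(enorm v) enorm_cV.
set V := \sum_(i < N) v i 0 ^+ 2.
have V_ge0 : 0 <= V by apply: sumr_ge0 => i _; apply: sqr_ge0.
rewrite -sqrtrM ?mulr_ge0 // ler_sqrt ?mulr_ge0 //.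
have -> : N%:R * (\sum_(i < d) \sum_(k < N) X i k ^+ 2) * V =
    \sum_(i < d) (N%:R * (\sum_(k < N) X i k ^+ 2) * V).
  by rewrite -big_distrl -big_distrr.
apply: ler_sum => i _; rewrite big_ord1 mxE.
apply: le_trans (sqr_sum_le _) _; rewrite -mulrA ler_wpM2l // mulr_suml.
apply: ler_sum => k _; rewrite exprMn ler_wpM2l ?sqr_ge0 //.
by apply: ler_term_sum => j; apply: sqr_ge0.
Qed.

Lemma vdot_emp_grad (l : R -> R) w u :
  vdot (emp_grad l X w) u = N%:R^-1 * \sum_(i < N) derive1 l (margin X w i) * margin X u i.
Proof.
rewrite /vdot /margin big_distrr /=.
rewrite (eq_bigr (fun j => \sum_(i < N) N%:R^-1 *
    (derive1 l (margin X w i) * (u 0 j * X j i)))) => [|j _].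
  by rewrite exchange_big /=; apply: eq_bigr => i _; rewrite -!big_distrr.
rewrite mxE -mulrA big_distrl big_distrr /=; apply: eq_bigr => i _.
by rewrite -mulrA [X j i * _]mulrC.
Qed.

Lemma margin_emp_grad_single (l : R -> R) w i0 : (forall j : 'I_N, j = i0) ->
  margin X (emp_grad l X w) i0 =
    N%:R^-1 * derive1 l (margin X w i0) * \sum_(c < d) X c i0 ^+ 2.
Proof.
move=> single; rewrite /margin mulr_sumr; apply: eq_bigr => c _; rewrite mxE.
rewrite (bigD1 i0) //= big1 ?addr0 => [|j /eqP []]; last exact: single.
by rewrite expr2 !mulrA.
Qed.

Let spectral_bounds_nonempty :
  [set c : R | 0 <= c /\ forall v : 'cV[R]_N, enorm (X *m v) <= c * enorm v] !=set0.
Proof. by exists (Num.sqrt (N%:R * enorm X ^+ 2)); split => //; apply: enorm_mulmx_le. Qed.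

Lemma spectral_normP (v : 'cV[R]_N) : enorm (X *m v) <= sigma * enorm v.
Proof.
have [v0|v_neq0] := eqVneq (enorm v) 0.
  by have := enorm_mulmx_le v; rewrite v0 !mulr0.
have v_gt0 : 0 < enorm v by rewrite lt_def v_neq0 sqrtr_ge0.
rewrite -ler_pdivrMr //; apply: lb_le_inf spectral_bounds_nonempty _ => c [_ hc].
by rewrite ler_pdivrMr.
Qed.

Lemma spectral_norm_ge0 : 0 <= sigma.
Proof. by apply: lb_le_inf spectral_bounds_nonempty _ => c []. Qed.

(* the margins are the entries of X^T u, and X^T has the same operator norm as X *)
Lemma sum_margin_sqr_le u : 0 < sigma ->
  \sum_(i < N) margin X u i ^+ 2 <= sigma ^+ 2 * vnorm2 u.
Proof.
move=> sigma_gt0; set B := \sum_(i < N) margin X u i ^+ 2.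
pose v : 'cV[R]_N := \col_i margin X u i.
pose y j := (X *m v) j 0.
have B_ge0 : 0 <= B by apply: sumr_ge0 => i _; apply: sqr_ge0.
have B_dot : B = \sum_(j < d) u 0 j * y j.
  rewrite /B /y (eq_bigr (fun i => \sum_(j < d) u 0 j * (X j i * v i 0))) => [|i _].
    rewrite exchange_big /=; apply: eq_bigr => j _; rewrite mxE big_distrr /=.
    by apply: eq_bigr => i _.
  by rewrite expr2 {2}/margin big_distrl /=; apply: eq_bigr => j _; rewrite mxE mulrA.
have y2_le : \sum_(j < d) y j ^+ 2 <= sigma ^+ 2 * B.
  have := spectral_normP v; rewrite !enorm_cV.
  have -> : \sum_(i < N) v i 0 ^+ 2 = B by apply: eq_bigr => i _; rewrite mxE.
  rewrite -(ler_pXn2r (n := 2)) ?nnegrE ?sqrtr_ge0 ?mulr_ge0 ?spectral_norm_ge0 //.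
  by rewrite exprMn !sqr_sqrtr //; apply: sumr_ge0 => j _; apply: sqr_ge0.
have s2_gt0 : 0 < sigma ^+ 2 by rewrite exprn_gt0.
(* AM-GM: 2 u_j y_j <= s^2 u_j^2 + y_j^2 / s^2 *)
have amgm : 2 * B <= sigma ^+ 2 * vnorm2 u + (\sum_(j < d) y j ^+ 2) / sigma ^+ 2.
  rewrite B_dot /vnorm2 /vdot mulr_sumr big_distrr /= mulr_suml -big_split /=.
  apply: ler_sum => j _.
  have : 0 <= (sigma ^+ 2 * u 0 j - y j) ^+ 2 / sigma ^+ 2 by rewrite divr_ge0 ?sqr_ge0 ?ltW.
  rewrite sqrrB mulrDl mulrBl; set a := u 0 j; set b := y j; set s := sigma ^+ 2.
  have -> : (s * a) ^+ 2 / s = s * (a * a) by field; rewrite gt_eqF.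
  have -> : s * a * b *+ 2 / s = 2 * (a * b) by rewrite -mulr_natr; field; rewrite gt_eqF.
  lra.
have : (\sum_(j < d) y j ^+ 2) / sigma ^+ 2 <= B by rewrite ler_pdivrMr // mulrC.
lra.
Qed.

End DataMatrix.

Section FirstExit.
Variables (R : realFieldType) (I : finType).

Lemma first_exit (a b : I -> R) (c : R) i1 :
  (forall i, c <= a i) -> a i1 + b i1 < c ->
  exists i0 s, [/\ 0 <= s < 1, a i0 + s * b i0 = c, b i0 < 0 &
                   forall j, c <= a j + s * b j].
Proof.
move=> a_ge exit1.
pose P i := a i + b i < c; pose r i := (a i - c) / - b i.
have b_lt0 j : P j -> b j < 0 by rewrite /P => Pj; have := a_ge j; lra.
have r_exit j : P j -> a j + r j * b j = c.
  by move=> /b_lt0 bj; rewrite /r; field; rewrite lt_eqF.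
case: (@arg_minP _ _ _ i1 P r exit1) => i0 Pi0 r_min; set s := r i0.
have nb0 : 0 < - b i0 by rewrite oppr_gt0 b_lt0.
have s_ge0 : 0 <= s by rewrite divr_ge0 ?subr_ge0 ?a_ge ?ltW.
have s_lt1 : s < 1 by rewrite ltr_pdivrMr // mul1r; move: Pi0; rewrite /P; lra.
exists i0, s; split; [by rewrite s_ge0 | exact: r_exit | exact: b_lt0 |].
move=> j; case Pj: (P j).
  have := r_exit j Pj; have := b_lt0 j Pj => bj.
  have := ler_wnM2r (ltW bj) (r_min j Pj); rewrite -/s; lra.
move/negbT: Pj; rewrite /P -leNgt => stay; have := a_ge j => aj.
have e1 : 0 <= (1 - s) * (a j - c) by apply: mulr_ge0; rewrite subr_ge0 // ltW.
have e2 : 0 <= s * (a j + b j - c) by rewrite mulr_ge0 // subr_ge0.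
nra.
Qed.

End FirstExit.

Section GradientDescentMomentum.
Variables (R : realType) (d N : nat) (X : 'M[R]_(d, N)) (l : R -> R).
Variables (beta eta s1 : R) (w m : nat -> 'rV[R]_d).
Hypothesis l_derivable : forall x : R, derivable l x 1.
Hypothesis derive1_lt0 : forall x : R, derive1 l x < 0.
Hypothesis l_cvg0 : l x @[x --> +oo] --> 0.
Hypothesis derive1_lip : exists c : R, 0 <= c /\ forall x y, s1 <= x -> s1 <= y ->
  `|derive1 l x - derive1 l y| <= c * `|x - y|.
Hypotheses (beta_ge0 : 0 <= beta) (beta_lt1 : beta < 1) (eta_gt0 : 0 < eta).
Hypothesis l_s1 : l s1 = N%:R * emp_loss l X (w 1%N).
Hypothesis eta_lt :
  eta < 2 * N%:R / (spectral_norm X ^+ 2 * lip_const_above (derive1 l) s1).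
Hypothesis m0 : m 0%N = 0.
Hypothesis m_rec : forall t : nat, (1 <= t)%N ->
  m t = beta *: m t.-1 + (1 - beta) *: emp_grad l X (w t).
Hypothesis w_rec : forall t : nat, (1 <= t)%N -> w t.+1 = w t - eta *: m t.

Local Notation L := (emp_loss l X).
Local Notation L1 := (L (w 1%N)).
Local Notation grad := (emp_grad l X).
Local Notation a v i := (margin X v i).
Local Notation H := (lip_const_above (derive1 l) s1).
Local Notation sigma := (spectral_norm X).
(* Lc is the smoothness constant of L where all margins are >= s1, and cc the guaranteed
   decrease rate of the energy L(w(t)) + k |dw(t-1)|^2 *)
Local Notation alpha := (eta * (1 - beta)).
Local Notation k := (beta / (2 * alpha)).
Local Notation Lc := (H * sigma ^+ 2 / N%:R).
Local Notation cc := (eta^-1 - Lc / 2).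

Let l_gt0 : forall x, 0 < l x := loss_gt0 l_derivable derive1_lt0 l_cvg0.

Lemma Nr_gt0 : 0 < N%:R :> R.
Proof.
rewrite ltr0n; case: (posnP N) => // N0.
have N0r : N%:R = 0 :> R by rewrite N0.
by have := l_gt0 s1; rewrite l_s1 N0r mul0r ltxx.
Qed.

Lemma N_emp_loss v : N%:R * L v = \sum_(i < N) l (a v i).
Proof. by rewrite mulrA mulfV ?mul1r // gt_eqF // Nr_gt0. Qed.

Lemma emp_loss_ge0 v : 0 <= L v.
Proof. by rewrite mulr_ge0 ?invr_ge0 ?ler0n //; apply: sumr_ge0 => i _; apply/ltW. Qed.

Lemma H_ge0 : 0 <= H.
Proof. exact: lip_const_above_ge0. Qed.

(* otherwise the step-size bound would read eta < 0, since x / 0 = 0 *)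
Lemma sigma2_H_gt0 : 0 < sigma ^+ 2 * H.
Proof.
rewrite lt_def mulr_ge0 ?sqr_ge0 ?H_ge0 // andbT; apply/negP => /eqP sH0.
by move: eta_lt; rewrite sH0 invr0 mulr0 => /(lt_trans eta_gt0); rewrite ltxx.
Qed.

Lemma sigma_gt0 : 0 < sigma.
Proof.
rewrite lt_def spectral_norm_ge0 andbT; apply/negP => /eqP s0.
by have := sigma2_H_gt0; rewrite s0 expr0n /= mul0r ltxx.
Qed.

Lemma eta_Lc_lt2 : eta * Lc < 2.
Proof.
have := eta_lt; rewrite ltr_pdivlMr ?sigma2_H_gt0 // => lt2.
rewrite mulrA ltr_pdivrMr ?Nr_gt0 //; apply: le_lt_trans lt2.
by rewrite [H * _]mulrC.
Qed.

Lemma alpha_gt0 : 0 < alpha.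
Proof. by rewrite mulr_gt0 // subr_gt0. Qed.

Lemma k_ge0 : 0 <= k.
Proof. by rewrite divr_ge0 // mulr_ge0 // ltW // alpha_gt0. Qed.

Lemma Lc_ge0 : 0 <= Lc.
Proof. by rewrite divr_ge0 ?ler0n // mulr_ge0 ?sqr_ge0 ?H_ge0. Qed.

Lemma cc_gt0 : 0 < cc.
Proof.
have -> : cc = (2 - eta * Lc) / (2 * eta).
  by field; rewrite !gt_eqF // Nr_gt0.
by rewrite divr_gt0 ?mulr_gt0 // subr_gt0 eta_Lc_lt2.
Qed.

Lemma inv_alpha : alpha^-1 = eta^-1 + 2 * k.
Proof.
have beta_neq1 : 1 - beta != 0 by rewrite subr_eq0 gt_eqF.
by field; rewrite beta_neq1 gt_eqF.
Qed.

Lemma margin_ge_of_emp_loss_le v : L v <= L1 -> forall i, s1 <= a v i.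
Proof.
move=> Lv_le i; rewrite leNgt; apply/negP => /(loss_decr l_derivable derive1_lt0).
have : l (a v i) <= \sum_(j < N) l (a v j).
  by apply: ler_term_sum => j; apply/ltW.
have : N%:R * L v <= N%:R * L1 by rewrite ler_wpM2l ?ler0n.
by rewrite N_emp_loss -l_s1; lra.
Qed.

Lemma emp_loss_descent v u : (forall i, s1 <= a v i) -> (forall i, s1 <= a (v + u) i) ->
  L (v + u) <= L v + vdot (grad v) u + Lc / 2 * vnorm2 u.
Proof.
move=> v_ge vu_ge; rewrite vdot_emp_grad.
apply: (@le_trans _ _ (L v + N%:R^-1 * \sum_(i < N) derive1 l (a v i) * a u i
                        + H / 2 * N%:R^-1 * \sum_(i < N) a u i ^+ 2)).
  rewrite /emp_loss [H / 2 / _ * _]mulrAC [_ * N%:R^-1]mulrC -!mulrDr.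
  rewrite ler_wpM2l ?invr_ge0 ?ler0n // !big_distrr -!big_split /=.
  apply: ler_sum => i _; have := descent_above l_derivable derive1_lip (v_ge i) (vu_ge i).
  by rewrite marginD (addrC (a v i)) addrK.
have -> : Lc / 2 * vnorm2 u = H / 2 / N%:R * (sigma ^+ 2 * vnorm2 u) by ring.
rewrite lerD2l ler_wpM2l ?divr_ge0 ?H_ge0 ?ler0n //.
exact: sum_margin_sqr_le sigma_gt0.
Qed.

Lemma vdot_grad_momentum v p dv : dv = beta *: p - alpha *: grad v ->
  vdot (grad v) dv <= k * vnorm2 p + (k - alpha^-1) * vnorm2 dv.
Proof.
move=> dv_def; have a_gt0 := alpha_gt0.
have beta_neq1 : 1 - beta != 0 by rewrite subr_eq0 gt_eqF.
have dv2 : vnorm2 dv = beta * vdot p dv - alpha * vdot (grad v) dv.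
  by rewrite {1}/vnorm2 {1}dv_def vdotDl vdotNl !vdotZl.
have -> : vdot (grad v) dv = alpha^-1 * (beta * vdot p dv - vnorm2 dv).
  by rewrite dv2; field; rewrite beta_neq1 gt_eqF.
have -> : k * vnorm2 p + (k - alpha^-1) * vnorm2 dv =
    alpha^-1 * (beta / 2 * (vnorm2 p + vnorm2 dv) - vnorm2 dv).
  by field; rewrite beta_neq1 gt_eqF.
rewrite ler_pM2l ?invr_gt0 // lerD2r.
have := ler_wpM2l beta_ge0 (vdot_le p dv); lra.
Qed.

Lemma emp_loss_momentum_step v p dv s : dv = beta *: p - alpha *: grad v ->
  0 <= s <= 1 -> (forall i, s1 <= a v i) -> (forall i, s1 <= a (v + s *: dv) i) ->
  L (v + s *: dv) <= L v + k * vnorm2 p - s * (cc + k) * vnorm2 dv.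
Proof.
move=> dv_def /andP[s_ge0 s_le1] v_ge vs_ge.
have := emp_loss_descent v_ge vs_ge; rewrite vdotZr /vnorm2 vdotZl vdotZr -!/(vnorm2 _).
have P_ge0 := vnorm2_ge0 p; have D_ge0 := vnorm2_ge0 dv; have k0 := k_ge0.
set P := vnorm2 p; set D := vnorm2 dv; set G := vdot (grad v) dv.
have grad_le : s * G <= s * (k * P + (k - alpha^-1) * D).
  exact: ler_wpM2l (vdot_grad_momentum dv_def).
have curv_le : Lc / 2 * (s * (s * D)) <= Lc / 2 * (s * D).
  apply: ler_wpM2l; first by rewrite divr_ge0 ?Lc_ge0.
  by apply: ler_piMl; rewrite ?mulr_ge0.
have mom_le : s * (k * P) <= k * P by apply: ler_piMl => //; apply: mulr_ge0.
rewrite inv_alpha in grad_le.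
have : s * (k * P + (k - (eta^-1 + 2 * k)) * D) + Lc / 2 * (s * D) =
       s * (k * P) - s * (cc + k) * D by ring.
lra.
Qed.

(* if the segment already starts on the boundary, the energy budget is exhausted:
   N = 1, beta p = 0, and dv = - alpha grad v points into the region *)
Lemma exit_not_at_start v p dv i0 : dv = beta *: p - alpha *: grad v ->
  L v + k * vnorm2 p <= L1 -> a v i0 = s1 -> 0 <= a dv i0.
Proof.
move=> dv_def E_le v_i0.
have Np := Nr_gt0.
have sum_le : \sum_(j < N) l (a v j) + N%:R * (k * vnorm2 p) <= l s1.
  by rewrite -N_emp_loss -mulrDr l_s1 ler_wpM2l ?ler0n.
rewrite (bigD1 i0) //= v_i0 in sum_le.
set rest := \sum_(j < N | j != i0) l (a v j) in sum_le.
have kp_ge0 : 0 <= N%:R * (k * vnorm2 p) by rewrite mulr_ge0 ?ler0n // mulr_ge0 ?k_ge0 ?vnorm2_ge0.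
have rest_ge0 : 0 <= rest by apply: sumr_ge0 => j _; exact: ltW.
have single j : j = i0.
  apply/eqP; apply/negPn/negP => j_neq.
  have : l (a v j) <= rest.
    by rewrite /rest (bigD1 j) //= lerDl; apply: sumr_ge0 => j' _; exact: ltW.
  by have := l_gt0 (a v j); lra.
have kp0 : k * vnorm2 p = 0.
  have /eqP : N%:R * (k * vnorm2 p) = 0 by lra.
  by rewrite mulf_eq0 (gt_eqF Np) => /eqP.
have bp0 : beta * a p i0 = 0.
  move/eqP: kp0; rewrite mulf_eq0 => /orP[|/eqP/margin_vnorm2_eq0 ->]; last by rewrite mulr0.
  rewrite mulf_eq0 invr_eq0 mulf_eq0 (gt_eqF alpha_gt0) pnatr_eq0 !orbF.
  by move=> /eqP ->; rewrite mul0r.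
rewrite dv_def marginB !marginZ bp0 sub0r (margin_emp_grad_single X l v single) oppr_ge0.
rewrite pmulr_rle0 ?alpha_gt0 //; apply: mulr_le0_ge0.
  by rewrite pmulr_rle0 ?invr_gt0 // ltW.
by apply: sumr_ge0 => c _; apply: sqr_ge0.
Qed.

Lemma momentum_step_margins_ge v p dv : dv = beta *: p - alpha *: grad v ->
  L v + k * vnorm2 p <= L1 -> forall i, s1 <= a (v + dv) i.
Proof.
move=> dv_def E_le.
have Lv_le : L v <= L1 by have := mulr_ge0 k_ge0 (vnorm2_ge0 p); lra.
have v_ge := margin_ge_of_emp_loss_le Lv_le.
move=> i1; rewrite marginD leNgt; apply/negP => exit1.
have [i0 [s [/andP[s_ge0 s_lt1] hit dv_i0 stay]]] := first_exit v_ge exit1.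
have vs_ge j : s1 <= a (v + s *: dv) j by rewrite marginD marginZ; exact: stay.
have s01 : 0 <= s <= 1 by rewrite s_ge0 ltW.
have L_le := emp_loss_momentum_step dv_def s01 v_ge vs_ge.
have l_s1_le : l s1 <= N%:R * L (v + s *: dv).
  rewrite N_emp_loss -hit -marginZ -marginD.
  by apply: ler_term_sum => j; exact: ltW.
have [s_gt0|] := ltP 0 s; last first.
  move=> s_le0; have s0 : s = 0 by apply/eqP; rewrite eq_le s_le0 s_ge0.
  rewrite s0 mul0r addr0 in hit.
  by have := exit_not_at_start dv_def E_le hit; rewrite leNgt dv_i0.
have D_gt0 : 0 < vnorm2 dv.
  rewrite lt_def vnorm2_ge0 andbT; apply/eqP => /(margin_vnorm2_eq0 X i0) dv0.
  by move: dv_i0; rewrite dv0 ltxx.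
have cck_gt0 : 0 < cc + k by have := cc_gt0; have := k_ge0; lra.
have : 0 < s * (cc + k) * vnorm2 dv by rewrite !mulr_gt0.
have : N%:R * L (v + s *: dv) <= N%:R * L1 - N%:R * (s * (cc + k) * vnorm2 dv).
  rewrite -mulrBr ler_wpM2l ?ler0n //; lra.
have := Nr_gt0; rewrite -l_s1; nra.
Qed.

Lemma energy_decrease v p dv : dv = beta *: p - alpha *: grad v ->
  L v + k * vnorm2 p <= L1 ->
  L (v + dv) + k * vnorm2 dv <= L v + k * vnorm2 p - cc * vnorm2 dv.
Proof.
move=> dv_def E_le.
have Lv_le : L v <= L1 by have := mulr_ge0 k_ge0 (vnorm2_ge0 p); lra.
have vd_ge i : s1 <= a (v + 1 *: dv) i.
  by rewrite scale1r (momentum_step_margins_ge dv_def E_le).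
have unit01 : 0 <= (1 : R) <= 1 by rewrite ler01 lexx.
have := emp_loss_momentum_step dv_def unit01 (margin_ge_of_emp_loss_le Lv_le) vd_ge.
rewrite scale1r mul1r; lra.
Qed.

Local Notation dw t := (- eta *: m t).

Lemma dw_rec t : (1 <= t)%N -> dw t = beta *: dw t.-1 - alpha *: grad (w t).
Proof.
move=> t_ge1; rewrite m_rec // scalerDr !scalerA.
by congr (_ + _); [rewrite mulrC | rewrite mulNr scaleNr].
Qed.

Lemma w_succ t : (1 <= t)%N -> w t.+1 = w t + dw t.
Proof. by move=> t_ge1; rewrite w_rec // scaleNr. Qed.

Lemma energy_bound t : (1 <= t)%N ->
  L (w t) + k * vnorm2 (dw t.-1) + cc * \sum_(1 <= j < t) vnorm2 (dw j) <= L1.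
Proof.
elim: t => [//|[|t] IHt] _.
  rewrite big_geq // mulr0 addr0 /= m0 scaler0 vnorm2E big1 ?mulr0 ?addr0 // => j _.
  by rewrite mxE expr0n.
have {IHt} := IHt isT; rewrite /= => E_t.
have S_ge0 : 0 <= cc * \sum_(1 <= j < t.+1) vnorm2 (dw j).
  by apply: mulr_ge0; [exact: ltW cc_gt0 | apply: sumr_ge0 => j _; exact: vnorm2_ge0].
have E_le : L (w t.+1) + k * vnorm2 (dw t) <= L1 by lra.
have := energy_decrease (dw_rec (isT : (1 <= t.+1)%N)) E_le.
by rewrite -w_succ // big_nat_recr //= [cc * (_ + _)]mulrDr; lra.
Qed.

Lemma sum_vnorm2_dw_le n : \sum_(1 <= j < n) vnorm2 (dw j) <= L1 / cc.
Proof.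
have cc0 := cc_gt0; rewrite ler_pdivlMr // mulrC.
case: n => [|n]; first by rewrite big_geq // mulr0 emp_loss_ge0.
have := energy_bound (isT : (1 <= n.+1)%N); have := emp_loss_ge0 (w n.+1).
have : 0 <= k * vnorm2 (dw n) by rewrite mulr_ge0 ?k_ge0 ?vnorm2_ge0.
rewrite /=; lra.
Qed.

Lemma vnorm2_w_le t : (1 <= t)%N ->
  vnorm2 (w t) <= t%:R * (vnorm2 (w 1%N) + \sum_(1 <= j < t) vnorm2 (dw j)).
Proof.
move=> t_ge1.
have coord_le j : w t 0 j ^+ 2 <=
    t%:R * (w 1%N 0 j ^+ 2 + \sum_(1 <= i < t) (dw i) 0 j ^+ 2).
  elim: t t_ge1 => [//|[|t] IHt] _; first by rewrite big_geq // addr0 mul1r.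
  rewrite w_succ // mxE big_nat_recr //= addrA -natr1.
  apply: sqrD_le; rewrite ?ler0n ?IHt //.
  by rewrite addr_ge0 ?sqr_ge0 //; apply: sumr_ge0 => i _; apply: sqr_ge0.
rewrite vnorm2E; apply: le_trans (ler_sum _ (fun j _ => coord_le j)) _.
rewrite -mulr_sumr ler_wpM2l ?ler0n // big_split /= vnorm2E lerD2l exchange_big /=.
by under [X in _ <= X]eq_bigr do rewrite vnorm2E.
Qed.

Lemma enorm_step_sqr t : (1 <= t)%N -> enorm (w t.+1 - w t) ^+ 2 = vnorm2 (dw t).
Proof.
by move=> t_ge1; rewrite w_succ // addrAC subrr add0r enorm_rV sqr_sqrtr ?vnorm2_ge0.
Qed.

Lemma gdm_steps_sqr_summable :
  (\sum_(1 <= t <oo) ((enorm (w t.+1 - w t)) ^+ 2)%:E < +oo)%E.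
Proof.
apply: (@le_lt_trans _ _ (L1 / cc)%:E); last by rewrite ltry.
apply: lime_le.
  by apply: is_cvg_ereal_nneg_natsum => n _; rewrite lee_fin sqr_ge0.
apply: nearW => n; rewrite sumEFin lee_fin; apply: le_trans (sum_vnorm2_dw_le n).
by apply: ler_sum_nat => t /andP[t_ge1 _]; rewrite enorm_step_sqr.
Qed.

Lemma gdm_norm_sqrt_growth :
  exists C : R, \forall t \near \oo, enorm (w t) <= C * Num.sqrt t%:R.
Proof.
have B_ge0 : 0 <= L1 / cc by apply: le_trans (sum_vnorm2_dw_le 0); rewrite big_geq.
exists (Num.sqrt (vnorm2 (w 1%N) + L1 / cc)); near=> t.
have t_ge1 : (1 <= t)%N by near: t; exists 1%N.
rewrite enorm_rV mulrC -sqrtrM ?ler0n // ler_sqrt ?mulr_ge0 ?ler0n ?addr_ge0 ?vnorm2_ge0 //.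
apply: le_trans (vnorm2_w_le t_ge1) _.
by rewrite ler_wpM2l ?ler0n // lerD2l sum_vnorm2_dw_le.
Unshelve. all: by end_near.
Qed.

End GradientDescentMomentum.

Theorem mainTheorem9 (R : realType) (d N : nat) (X : 'M[R]_(d, N))
  (l : R -> R) (beta eta : R) (w m : nat -> 'rV[R]_d) (s1 : R) :
  (* A1: linear separability *)
  (exists u : 'rV[R]_d, forall i : 'I_N, 0 < margin X u i) ->
  (* A2 *)
  (forall x : R, derivable l x 1) ->
  (forall x : R, derive1 l x < 0) ->
  (l x @[x --> +oo] --> 0) ->
  (derive1 l x @[x --> +oo] --> 0) ->
  (limf_esup (fun x : R => (derive1 l x)%:E) (-oo%R : set_system R) < 0%E)%E ->
  (exists mup xp : R, 0 < mup /\ 0 < xp /\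
     forall x, xp < x -> - derive1 l x <= (1 + expR (- (mup * x))) * expR (- x)) ->
  (exists mum xm : R, 0 < mum /\ 0 < xm /\
     forall x, xm < x -> (1 - expR (- (mum * x))) * expR (- x) <= - derive1 l x) ->
  (* A3(D): H_{s0} is finite for every s0 *)
  (forall s0 : R, exists c : R, 0 <= c /\ forall x y, s0 <= x -> s0 <= y ->
       `|derive1 l x - derive1 l y| <= c * `|x - y|) ->
  (* step sizes *)
  0 <= beta < 1 ->
  (* s1 = l^{-1}(N L(w(1))) *)
  l s1 = N%:R * emp_loss l X (w 1%N) ->
  0 < eta ->
  eta < 2 * N%:R / (spectral_norm X ^+ 2 * lip_const_above (derive1 l) s1) ->
  (* GDM recursion, started from an arbitrary w(1) *)
  m 0%N = 0 ->
  (forall t : nat, (1 <= t)%N ->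
     m t = beta *: m t.-1 + (1 - beta) *: emp_grad l X (w t)) ->
  (forall t : nat, (1 <= t)%N -> w t.+1 = w t - eta *: m t) ->
  (\sum_(1 <= t <oo) ((enorm (w t.+1 - w t)) ^+ 2)%:E < +oo)%E /\
  (exists C : R, \forall t \near \oo, enorm (w t) <= C * Num.sqrt t%:R).
Proof.
move=> _ l_der l'_lt0 l_cvg0 _ _ _ _ l'_lip /andP[beta_ge0 beta_lt1] l_s1 eta_gt0 eta_lt
  m0 m_rec w_rec.
split.
- exact: (gdm_steps_sqr_summable l_der l'_lt0 l_cvg0 (l'_lip s1) beta_ge0 beta_lt1
    eta_gt0 l_s1 eta_lt m0 m_rec w_rec).
- exact: (gdm_norm_sqrt_growth l_der l'_lt0 l_cvg0 (l'_lip s1) beta_ge0 beta_lt1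
    eta_gt0 l_s1 eta_lt m0 m_rec w_rec).
Qed.
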